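(* Let $T$ be a tournament, let $P=x_0x_1\ldots x_r$ be a path of length $r$ in $T$, and let $z\in V(T)\setminus V(P)$ be a vertex such that every vertex of $\{x_{\alpha+1},x_{\alpha+2},\ldots,x_r\}$ dominates $z$ and $z$ dominates every vertex of $\{x_0,x_1,\ldots,x_\alpha\}$, where $\alpha\in[2,r-3]$. Assume that $T$ contains no $(x_0,x_r)$-path of length $r+1$ whose vertex set is $\{z\}\cup V(P)$. Suppose that $x_sx_t$ is an arc of $T$ with $s\in[1,\alpha-1]$ and $t\in[\alpha+3,r]$. Then: if $s\geq 3$, no vertex of $\{x_0,x_1,\ldots,x_{s-2}\}$ dominates a vertex of $\{x_{\alpha+2},x_{\alpha+3},\ldots,x_{t-1}\}$; and if $t-s\neq 5$, then $x_{s-1}$ dominates no vertex of $\{x_{\alpha+2},x_{\alpha+3},\ldots,x_{t-1}\}$.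
   Context: Paths are directed and simple; the length of a path is its number of arcs. A vertex $u$ dominates $v$ if $uv$ is an arc. $[a,b]$ denotes the integers from $a$ to $b$. *)

From mathcomp Require Import all_boot.
Set Implicit Arguments. Unset Strict Implicit. Unset Printing Implicit Defensive.

(* A tournament on a finite vertex type V: adj u v means "u dominates v" (arc uv).
   No loops, and for distinct u, v exactly one of uv, vu is an arc. *)
Definition tournament (V : finType) (adj : rel V) : Prop :=
  irreflexive adj /\ forall u v : V, u != v -> adj u v = ~~ adj v u.

(* A directed simple path, given as its (nonempty) sequence of vertices;
   its length is size s - 1 (number of arcs). *)
Definition dpath (V : finType) (adj : rel V) (s : seq V) : Prop :=
  s <> [::] /\ uniq s /\ sorted adj s.

From mathcomp Require Import all_boot zify.

Set Implicit Arguments.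
Unset Strict Implicit.
Unset Printing Implicit Defensive.

(* Each step of the argument refutes an arc by rerouting: cut P into intervals
   of consecutive vertices and reassemble them, with z inserted after some
   x_a (a > alpha) and before some x_b (b <= alpha), into an (x_0, x_r)-path
   through V(P) and z, which is forbidden.  Assuming x_i x_j is an arc with
   i < s, such reroutings force x_{i+1} x_{j-1}, x_{s+1} x_{t-1} and
   x_{s+2} x_{i+1}.  Then no c has both x_c x_{i+1} and x_{t-1} x_{c+1}, while
   x_c x_{i+1} propagates from c to c+2 whenever x_{t-1} does not dominate
   x_{c+1}.  The first pattern holds at c = s+2; further reroutings near j
   give the second at an odd distance (when j = t-1 they work near t, possibly
   moving the first pattern to s+3, and need i <= s-2 or t-s <> 5), so a
   parity count makes the two meet. *)

Lemma odd_gap_meet (X Y : pred nat) c0 c1 :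
  c0 < c1 -> odd (c0 + c1) -> Y c0 -> X c1 ->
  (forall c, c0 <= c -> c + 1 < c1 -> ~~ X (c + 1) -> Y (c + 2)) ->
  exists2 c, c0 <= c < c1 & Y c && X (c + 1).
Proof.
have [n le_gap] : exists n, c1 - c0 <= n by exists (c1 - c0).
elim: n c0 le_gap => [|n IHn] c0 le_gap lt01 odd01 Yc0 Xc1 step; first lia.
have [Xc0S | nXc0S] := boolP (X (c0 + 1)).
  by exists c0; [lia | rewrite Yc0].
have lt_c0S : c0 + 1 < c1 by apply: contraNltn nXc0S => ?; have -> : c0 + 1 = c1 by lia.
have [c c_bounds YXc] := IHn (c0 + 2) ltac:(lia) ltac:(lia) ltac:(lia)
  (step c0 (leqnn _) lt_c0S nXc0S) Xc1 (fun c _ => step c ltac:(lia)).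
by exists c; [lia | exact: YXc].
Qed.

Lemma last_iota a n : last a (iota a.+1 n) = a + n.
Proof. by elim: n a => [|n IHn] a /=; [rewrite addn0 | rewrite IHn addSnnS]. Qed.

Section Rerouting.
Variables (V : finType) (adj : rel V) (r : nat) (P : seq V) (z : V) (alpha : nat).
Hypothesis tourT : tournament adj.
Hypothesis dpath_P : dpath adj P.
Hypothesis size_P : size P = r.+1.
Hypothesis z_notin_P : z \notin P.
Hypothesis arc_to_z : forall i, alpha < i <= r -> adj (nth z P i) z.
Hypothesis arc_from_z : forall i, i <= alpha -> adj z (nth z P i).
Hypothesis no_spanning_path : ~ (exists Q : seq V, [/\ dpath adj Q, size Q = r.+2,
        head z Q = nth z P 0, last z Q = nth z P r & Q =i z :: P]).

(* Indices range over [0, r.+1]: index r.+1 stands for z, the default of nth. *)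
Definition arc a b := adj (nth z P a) (nth z P b).

Lemma nth_P_r1 : nth z P r.+1 = z.
Proof. by rewrite nth_default // size_P. Qed.

Lemma arc_z a : alpha < a <= r -> arc a r.+1.
Proof. by move=> ?; rewrite /arc nth_P_r1; apply: arc_to_z. Qed.

Lemma z_arc b : b <= alpha -> arc r.+1 b.
Proof. by move=> ?; rewrite /arc nth_P_r1; apply: arc_from_z. Qed.

Lemma uniq_P : uniq P. Proof. by case: dpath_P => _ []. Qed.

Lemma arc_succ a : a < r -> arc a a.+1.
Proof.
case: dpath_P => _ [_]; rewrite /arc.
case: P size_P => [//|x0 P'] /= [size_P'] /(pathP z) path_P lt_ar.
by apply: path_P; rewrite size_P'.
Qed.

Lemma arc_of_not_arc a b : a <= r -> b <= r -> a != b -> ~ arc b a -> arc a b.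
Proof.
move=> le_ar le_br neq_ab nba; case: tourT => _ tot.
rewrite /arc tot; last by rewrite (nth_uniq z _ _ uniq_P) ?size_P // eq_sym.
by apply/negP.
Qed.

Lemma arc_asym a b : arc a b -> arc b a -> False.
Proof.
case: tourT => irr tot; rewrite /arc => ab ba.
have [eq_ab | neq_ab] := eqVneq (nth z P a) (nth z P b).
  by move: ab; rewrite eq_ab irr.
by move: ab; rewrite tot // ba.
Qed.

Lemma path_arc_iota a n : a + n <= r -> path arc a (iota a.+1 n).
Proof.
elim: n a => [|n IHn] a le_anr //=.
by rewrite arc_succ ?IHn //; lia.
Qed.

Lemma no_spanning_index_path L :
  path arc 0 L -> last 0 L = r ->
  (forall y, (y \in 0 :: L) = (y <= r.+1)) -> size L = r.+1 -> False.
Proof.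
move=> path_L last_L mem_L size_L.
have perm_L : perm_eq (0 :: L) (iota 0 r.+2).
  apply: uniq_perm; last by move=> y; rewrite mem_iota mem_L.
    apply: (leq_size_uniq (iota_uniq 0 r.+2)); last by rewrite size_iota /= size_L.
    by move=> y; rewrite mem_iota mem_L.
  exact: iota_uniq.
have map_iota : [seq nth z P k | k <- iota 0 r.+2] = rcons P z.
  have -> : r.+2 = size P + 1 by rewrite size_P addn1.
  rewrite iotaD map_cat -cats1 /= size_P nth_P_r1 -size_P.
  by congr (_ ++ _); exact: mkseq_nth.
have perm_Q : perm_eq [seq nth z P k | k <- 0 :: L] (rcons P z).
  by rewrite -map_iota perm_map.
apply: no_spanning_path; exists [seq nth z P k | k <- 0 :: L]; split => //.
- split=> //; split; last by rewrite sorted_map.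
  by rewrite (perm_uniq perm_Q) rcons_uniq uniq_P andbT.
- by rewrite size_map /= size_L.
- by rewrite /= last_map last_L.
- by move=> y; rewrite (perm_mem perm_Q) mem_rcons.
Qed.

Definition route (T : seq (nat * nat)) : seq nat :=
  flatten [seq iota p.1 (p.2.+1 - p.1) | p <- T].

Fixpoint route_from (a : nat) (T : seq (nat * nat)) : Prop :=
  if T is p :: T' then
    [/\ arc a p.1, p.1 <= p.2, p.2 <= r \/ p.1 = p.2 & route_from p.2 T']
  else a = r.

Lemma route_from_path a T :
  route_from a T -> path arc a (route T) /\ last a (route T) = r.
Proof.
elim: T a => [|[lo hi] T IHT] a /=; first by [].
case=> arc_a le_lh hi_bound /IHT[path_T last_T].
rewrite /route /= -/(route T).
have -> : hi.+1 - lo = (hi - lo).+1 by lia.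
rewrite cat_path last_cat /= arc_a last_iota subnKC //.
rewrite last_T path_T andbT; split=> //.
by case: hi_bound => ?; [apply: path_arc_iota; lia | have -> : hi - lo = 0 by lia].
Qed.

Lemma no_spanning_route h T : h <= r -> route_from h T ->
  (forall y, (y \in route ((0, h) :: T)) = (y <= r.+1)) ->
  size (route ((0, h) :: T)) = r.+2 -> False.
Proof.
move=> le_hr /route_from_path[path_T last_T] mem_T size_T.
apply: (@no_spanning_index_path (iota 1 h ++ route T)) => //.
- by rewrite cat_path path_arc_iota // last_iota.
- by rewrite last_cat last_iota.
- by move: size_T; rewrite /route /= => -[].
Qed.

Ltac route_arc := match goal with
  | |- is_true (arc _ r.+1) => apply: arc_z; lia
  | |- is_true (arc r.+1 _) => apply: z_arc; lia
  | |- is_true (arc _ _) => assumption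
  | |- _ \/ _ => (left; lia) || (right; lia)
  | |- _ => lia
  end.

Ltac refute_route T := lazymatch T with
  | (0, ?h) :: ?T' => apply: (@no_spanning_route h T');
    [ lia
    | cbn [route_from fst snd]; repeat split; route_arc
    | let y := fresh "y" in
      move=> y; rewrite /route /= in_cons !mem_cat !mem_iota in_nil; lia
    | rewrite /route /= !size_cat !size_iota /=; lia ]
  end.

Section LongArc.
Variables (s t i j : nat).
Hypotheses (ge2_alpha : 2 <= alpha) (alpha_r : alpha + 3 <= r).
Hypotheses (s_bounds : 1 <= s <= alpha - 1) (t_bounds : alpha + 3 <= t <= r).
Hypotheses (arc_st : arc s t) (lt_is : i < s) (j_bounds : alpha + 2 <= j <= t - 1).
Hypothesis arc_ij : arc i j.

Lemma arc_Si_Pj : arc (i + 1) (j - 1).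
Proof.
apply: arc_of_not_arc; [lia | lia | lia | move=> Pj_Si].
refute_route [:: (0, i); (j, t - 1); (r.+1, r.+1); (s + 1, j - 1); (i + 1, s); (t, r)].
Qed.

Lemma arc_Ss_Pt : arc (s + 1) (t - 1).
Proof.
apply: arc_of_not_arc; [lia | lia | lia | move=> Pt_Ss].
refute_route [:: (0, i); (j, t - 1); (s + 1, j - 1); (r.+1, r.+1); (i + 1, s); (t, r)].
Qed.

Lemma arc_S2s_Si : arc (s + 2) (i + 1).
Proof.
have Ss_Pt := arc_Ss_Pt.
apply: arc_of_not_arc; [lia | lia | lia | move=> Si_S2s].
refute_route [:: (0, i + 1); (s + 2, t - 2); (r.+1, r.+1); (i + 2, s + 1); (t - 1, r)].
Qed.

Lemma arc_Pt_of_arc_Si d : i + 2 <= d -> d + 3 <= t ->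
  arc (i + 1) (d + 1) -> arc (t - 1) d.
Proof.
move=> le_i2d le_d3t Si_Sd.
apply: arc_of_not_arc; [lia | lia | lia | move=> d_Pt].
refute_route [:: (0, i + 1); (d + 1, t - 2); (r.+1, r.+1); (i + 2, d); (t - 1, r)].
Qed.

Lemma no_arc_to_Si_arc_Pt_succ d : s + 1 <= d -> d + 2 <= j ->
  arc d (i + 1) -> arc (t - 1) (d + 1) -> False.
Proof.
move=> le_s1d le_d2j d_Si Pt_Sd.
refute_route
  [:: (0, i); (j, t - 1); (d + 1, j - 1); (r.+1, r.+1); (s + 1, d); (i + 1, s); (t, r)].
Qed.

Lemma no_arc_Pt_odd_gap c0 c1 : s + 2 <= c0 < c1 -> c1 <= j - 1 -> odd (c0 + c1) ->
  arc c0 (i + 1) -> arc (t - 1) c1 -> False.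
Proof.
move=> c0_bounds le_c1j odd01 c0_Si Pt_c1.
have step c : c0 <= c -> c + 1 < c1 -> ~~ arc (t - 1) (c + 1) -> arc (c + 2) (i + 1).
  move=> le_c0c lt_c1 nPt_Sc; apply: arc_of_not_arc; [lia | lia | lia | move=> Si_S2c].
  move/negP: nPt_Sc; apply; apply: arc_Pt_of_arc_Si; [lia | lia |].
  by have -> : c + 1 + 1 = c + 2 by lia.
have [c c_bounds /andP[c_Si Pt_Sc]] :=
  @odd_gap_meet (arc (t - 1)) (arc^~ (i + 1)) c0 c1 ltac:(lia) odd01 c0_Si Pt_c1 step.
by apply: (@no_arc_to_Si_arc_Pt_succ c); lia.
Qed.

Lemma arc_Pt_P2j : arc (t - 1) (j - 2).
Proof.
apply: arc_Pt_of_arc_Si; [lia | lia |].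
have -> : j - 2 + 1 = j - 1 by lia.
exact: arc_Si_Pj.
Qed.

Lemma arc_Pt_Pj : j <= t - 2 -> arc (t - 1) (j - 1).
Proof.
move=> le_jt2; apply: arc_of_not_arc; [lia | lia | lia | move=> Pj_Pt].
refute_route [:: (0, i); (j, t - 2); (r.+1, r.+1); (i + 1, j - 1); (t - 1, r)].
Qed.

Lemma arc_S2i_P3t : j = t - 1 -> i + 3 <= alpha -> arc (i + 2) (t - 3).
Proof.
move=> j_Pt le_i3a.
have Si_P2t : arc (i + 1) (t - 2) by have := arc_Si_Pj; rewrite j_Pt -subnDA.
have [s_Si | lt_Sis] := eqVneq s (i + 1).
  have S2i_Pt : arc (i + 2) (t - 1) by have := arc_Ss_Pt; rewrite s_Si -addnA.
  apply: arc_of_not_arc; [lia | lia | lia | move=> P3t_S2i].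
  refute_route
    [:: (0, i + 1); (t - 2, t - 2); (r.+1, r.+1); (i + 3, t - 3); (i + 2, i + 2); (t - 1, r)].
apply: arc_of_not_arc; [lia | lia | lia | move=> P3t_S2i].
refute_route [:: (0, i + 1); (t - 2, t - 1); (r.+1, r.+1); (s + 1, t - 3); (i + 2, s); (t, r)].
Qed.

Lemma arc_Pt_P4t : i + 7 <= t -> i + 3 <= alpha -> arc (i + 2) (t - 3) -> arc (t - 1) (t - 4).
Proof.
move=> le_i7t le_i3a S2i_P3t.
apply: arc_of_not_arc; [lia | lia | lia | move=> P4t_Pt].
refute_route [:: (0, i + 2); (t - 3, t - 2); (r.+1, r.+1); (i + 3, t - 4); (t - 1, r)].
Qed.

Lemma arc_S3i_P2t : j = t - 1 -> s = i + 1 -> alpha = i + 2 -> s + 7 <= t ->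
  arc (i + 3) (t - 2).
Proof.
move=> j_Pt s_Si alpha_S2i le_s7t.
have Si_P2t : arc (i + 1) (t - 2) by have := arc_Si_Pj; rewrite j_Pt -subnDA.
have S2i_Pt : arc (i + 2) (t - 1) by have := arc_Ss_Pt; rewrite s_Si -addnA.
apply: arc_of_not_arc; [lia | lia | lia | move=> P2t_S3i].
refute_route
  [:: (0, i + 1); (t - 2, t - 2); (i + 3, t - 3); (r.+1, r.+1); (i + 2, i + 2); (t - 1, r)].
Qed.

Lemma arc_S4i_Si : s = i + 1 -> alpha = i + 2 -> s + 7 <= t ->
  arc (i + 3) (t - 2) -> arc (i + 4) (i + 1).
Proof.
move=> s_Si alpha_S2i le_s7t S3i_P2t.
apply: arc_of_not_arc; [lia | lia | lia | move=> Si_S4i].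
refute_route [:: (0, i + 1); (i + 4, t - 3); (r.+1, r.+1); (i + 2, i + 3); (t - 2, r)].
Qed.

Lemma no_long_arc_Pt : j = t - 1 -> odd (t + s) -> (i + 2 <= s \/ t - s != 5) -> False.
Proof.
move=> j_Pt odd_ts not_Ss_t5.
have S2s_Si := arc_S2s_Si.
have [le_i3a | lt_ai3] := leqP (i + 3) alpha.
  have Pt_P4t := arc_Pt_P4t ltac:(lia) le_i3a (arc_S2i_P3t j_Pt le_i3a).
  have [P4t_Ss | neq_P4t_Ss] := eqVneq (t - 4) (s + 1).
    by apply: (arc_asym arc_Ss_Pt); rewrite -P4t_Ss.
  by apply: (no_arc_Pt_odd_gap (c0 := s + 2) (c1 := t - 4)) => //; lia.
have s_Si : s = i + 1 by lia.
have alpha_S2i : alpha = i + 2 by lia.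
have le_s7t : s + 7 <= t by lia.
have S4i_Si := arc_S4i_Si s_Si alpha_S2i le_s7t (arc_S3i_P2t j_Pt s_Si alpha_S2i le_s7t).
apply: (no_arc_Pt_odd_gap (c0 := i + 4) (c1 := j - 2)) => //; [lia | lia | lia |].
exact: arc_Pt_P2j.
Qed.

Lemma no_long_arc : (i + 2 <= s \/ t - s != 5) -> False.
Proof.
move=> not_Ss_t5.
have S2s_Si := arc_S2s_Si.
have [lt_j_s4 | le_s4j] := ltnP j (s + 4).
  apply: (arc_asym S2s_Si).
  have -> : s + 2 = j - 1 by lia.
  exact: arc_Si_Pj.
have [odd_js | even_js] := boolP (odd (j + s)).
  apply: (no_arc_Pt_odd_gap (c0 := s + 2) (c1 := j - 2)) => //; [lia | lia | lia |].
  exact: arc_Pt_P2j.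
have [le_jP2t | lt_P2t_j] := leqP j (t - 2).
  by apply: (no_arc_Pt_odd_gap (c0 := s + 2) (c1 := j - 1)) => //; [lia | lia | exact: arc_Pt_Pj].
by apply: no_long_arc_Pt not_Ss_t5; lia.
Qed.

End LongArc.

End Rerouting.

Theorem lemma3p3 (V : finType) (adj : rel V) (r : nat) (P : seq V) (z : V)
    (alpha s t : nat) :
  tournament adj ->
  dpath adj P -> size P = r.+1 ->
  z \notin P ->
  2 <= alpha -> alpha + 3 <= r ->
  (forall i, alpha < i <= r -> adj (nth z P i) z) ->
  (forall i, i <= alpha -> adj z (nth z P i)) ->
  ~ (exists Q : seq V, [/\ dpath adj Q, size Q = r.+2,
        head z Q = nth z P 0, last z Q = nth z P r & Q =i z :: P]) ->
  1 <= s <= alpha - 1 -> alpha + 3 <= t <= r ->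
  adj (nth z P s) (nth z P t) ->
  (3 <= s -> forall i j, i <= s - 2 -> alpha + 2 <= j <= t - 1 ->
      ~~ adj (nth z P i) (nth z P j)) /\
  (t - s != 5 -> forall j, alpha + 2 <= j <= t - 1 ->
      ~~ adj (nth z P s.-1) (nth z P j)).
Proof.
move=> tourT dpath_P size_P z_notin_P ge2_alpha alpha_r arc_to_z arc_from_z
  no_path s_bounds t_bounds arc_st.
have no_arc i j := no_long_arc tourT dpath_P size_P z_notin_P arc_to_z arc_from_z
  no_path ge2_alpha alpha_r s_bounds t_bounds arc_st (i := i) (j := j).
split.
- move=> ge3_s i j le_is2 j_bounds; apply/negP => arc_ij.
  by apply: (no_arc i j _ j_bounds arc_ij); [lia | left; lia].
- move=> ts5 j j_bounds; apply/negP => arc_ij.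
  by apply: (no_arc s.-1 j _ j_bounds arc_ij); [lia | right].
Qed.
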